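(* Let $A=(n_A)_{n\ge0}$ be a cobweb tiling sequence with $0_A=1$, and let $s\ge0$ be an integer. Define the shifted sequence $B=\oplus_sA=(n_B)_{n\ge0}$ by $n_B=1$ for $n<s$ and $n_B=(n-s)_A$ for $n\ge s$. Then $B$ is also a cobweb tiling sequence.
   Context: Notation: $n_F\equiv F_n$. A sequence $F=(n_F)_{n\ge0}$ of natural numbers with $0_F=1$ is cobweb-admissible iff every $F$-nomial coefficient $\binom{n}{k}_F=\frac{n_F(n-1)_F\cdots(n-k+1)_F}{1_F2_F\cdots k_F}$, $0\le k\le n$, is a nonnegative integer. The cobweb poset of $F$ has, for each $s\ge1$, a level $\Phi_s$ consisting of $s_F$ distinct vertices (levels pairwise disjoint), plus a root level $\Phi_0$ with one vertex; for $x\in\Phi_i$, $y\in\Phi_j$ one has $x<y$ iff $i<j$. For $1\le a\le b$, the layer $\langle\Phi_a\to\Phi_b\rangle$ is the subposet on $\Phi_a\cup\dots\cup\Phi_b$; it has $m=b-a+1$ levels and its maximal chains form the set $\Phi_a\times\dots\times\Phi_b$. For a permutation $\sigma$ of $\{1,\dots,m\}$, a block of type $\sigma P_m$ in this layer is the subposet induced on $V_a\cup\dots\cup V_b$ where $V_{a-1+i}\subseteq\Phi_{a-1+i}$ and $|V_{a-1+i}|=\sigma(i)_F$ for $i=1,\dots,m$; its maximal chains form the set $V_a\times\dots\times V_b$. A tiling of the layer is a finite family of such blocks ($\sigma$ may vary from block to block) whose sets $V_a\times\dots\times V_b$ partition $\Phi_a\times\dots\times\Phi_b$ (pairwise max-disjoint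 and covering all maximal chains). A cobweb tiling sequence is a cobweb-admissible sequence $F$ such that for all $1\le a\le b$ the layer $\langle\Phi_a\to\Phi_b\rangle$ admits a tiling by blocks of type $\sigma P_{b-a+1}$. *)

From mathcomp Require Import all_boot all_fingroup.
Set Implicit Arguments. Unset Strict Implicit. Unset Printing Implicit Defensive.

Definition fnom_num (F : nat -> nat) (n k : nat) : nat := \prod_(i < k) F (n - i).
Definition fnom_den (F : nat -> nat) (k : nat) : nat := \prod_(i < k) F i.+1.

(* cobweb-admissible: 0_F = 1 and every F-nomial (0 <= k <= n) is a
   (well-defined) nonnegative integer: nonzero denominator dividing the numerator *)
Definition cobweb_admissible (F : nat -> nat) : Prop :=
  F 0 = 1 /\
  forall n k, k <= n -> 0 < fnom_den F k /\ fnom_den F k %| fnom_num F n k.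

(* Layer <Phi_a -> Phi_(a+m-1)>: level a+i (i < m) has vertex set 'I_(F (a+i)).
   A maximal chain picks one vertex in each level. *)
Definition chain (F : nat -> nat) (a m : nat) := forall i : 'I_m, 'I_(F (a + i)).

(* A block of type sigma P_m: sigma a permutation of {1..m} (encoded as 'S_m, value
   sigma i + 1), and a vertex subset V_(a+i) of each level. *)
Record block (F : nat -> nat) (a m : nat) := Block {
  bperm : 'S_m;
  bset : forall i : 'I_m, {set 'I_(F (a + i))}
}.

Definition block_ok (F : nat -> nat) (a m : nat) (B : block F a m) : Prop :=
  forall i : 'I_m, #|bset B i| = F (bperm B i).+1.

Definition in_block (F : nat -> nat) (a m : nat) (c : chain F a m) (B : block F a m) : bool :=
  [forall i : 'I_m, c i \in bset B i].

Definition layer_tiling (F : nat -> nat) (a m : nat) : Prop :=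
  exists bs : seq (block F a m),
    (forall i, i < size bs -> block_ok (nth (Block 1 (fun j => set0)) bs i)) /\
    (forall c : chain F a m, count (in_block c) bs = 1).

Definition cobweb_tiling (F : nat -> nat) : Prop :=
  cobweb_admissible F /\
  forall a m, 1 <= a -> 1 <= m -> layer_tiling F a m.

Definition shift_seq (s : nat) (A : nat -> nat) (n : nat) : nat :=
  if n < s then 1 else A (n - s).

From mathcomp Require Import all_boot all_fingroup.
From mathcomp Require Import zify.
Set Implicit Arguments. Unset Strict Implicit. Unset Printing Implicit Defensive.

(* Since 0_A = 1, the F-nomial products of B are products of A:
   the denominator 1_B...k_B equals 1_A...(k-s)_A, and the numerator
   n_B...(n-k+1)_B equals (n-s)_A ... taken over min(k, n-s) factors.  The
   denominator of A for k-s divides the denominator of A for min(k, n-s) (a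
   prefix of the same product), which divides the corresponding numerator of A.

   A layer of B with m levels starting at a splits into its first
   p = min(m, s) levels, on which every block type uses B-values 1_B = ... = s_B
   = 1, and its last m - p levels, which are the levels of an A-layer starting
   at a, with B-block sizes (p+i+1)_B = (i+1)_A.  Every A-tile T of that layer,
   combined with a choice u of one vertex in each of the first p levels, yields
   a B-block (singletons over u, then T; its permutation fixes the first p
   positions); these blocks tile the B-layer.  When m <= s the A-part is the
   empty layer, which is tiled by a single empty block. *)

Definition block_okb (F : nat -> nat) (a m : nat) (B : block F a m) : bool :=
  [forall i, #|bset B i| == F (bperm B i).+1].

Lemma block_okP (F : nat -> nat) (a m : nat) (B : block F a m) :
  reflect (block_ok B) (block_okb B).
Proof. by apply: (iffP forallP) => okB i; apply/eqP/okB. Qed.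

Lemma layer_tilingP (F : nat -> nat) (a m : nat) (bs : seq (block F a m)) :
  all (@block_okb F a m) bs -> (forall c, count (in_block c) bs = 1) ->
  layer_tiling F a m.
Proof. by move=> /all_nthP ok cover; exists bs; split=> // i /ok /block_okP. Qed.

Lemma empty_layer_tiling (F : nat -> nat) (a : nat) : layer_tiling F a 0.
Proof.
apply: (layer_tilingP (bs := [:: @Block F a 0 1 (fun _ => set0)])).
  by rewrite /= andbT; apply/forallP; case.
move=> c /=; suff -> : in_block c (@Block F a 0 1 (fun _ => set0)) by [].
by apply/forallP; case.
Qed.

Section PrependUnitLevels.
Variables (G A : nat -> nat) (a p m : nat).
Hypothesis G_levels : forall k : 'I_m, G (a + (p + k)) = A (a + k).
Hypothesis G_unit : forall j, j < p -> G j.+1 = 1.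
Hypothesis G_sizes : forall k : 'I_m, G (p + k).+1 = A k.+1.

Definition prefix_choice := {dffun forall j : 'I_p, 'I_(G (a + lshift m j))}.

Definition chain_prefix (c : chain G a (p + m)) : prefix_choice :=
  [ffun j => c (lshift m j)].

Definition chain_suffix (c : chain G a (p + m)) : chain A a m :=
  fun k => cast_ord (G_levels k) (c (rshift p k)).

Definition sum_perm_fun (sigma : 'S_m) (i : 'I_(p + m)) : 'I_(p + m) :=
  unsplit (match split i with inl j => inl j | inr k => inr (sigma k) end).

Lemma sum_perm_inj (sigma : 'S_m) : injective (sum_perm_fun sigma).
Proof.
move=> i i' /(can_inj unsplitK) eq_split; apply: (can_inj splitK).
by move: eq_split; case: (split i) => [j|k]; case: (split i') => [j'|k'] // [] // /perm_inj ->.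
Qed.

Definition prepend_block (T : block A a m) (u : prefix_choice) : block G a (p + m) :=
  Block (perm (@sum_perm_inj (bperm T)))
    (fun i => [set x : 'I_(G (a + i)) | match split i with
       | inl j => val x == val (u j)
       | inr k => [exists y in bset T k, val y == val x] end]).

Lemma in_prepend_block (c : chain G a (p + m)) (T : block A a m) (u : prefix_choice) :
  in_block c (prepend_block T u) = (chain_prefix c == u) && in_block (chain_suffix c) T.
Proof.
apply/forallP/andP.
- move=> inB; split.
  + apply/eqP/ffunP => j; rewrite ffunE; apply: val_inj.
    by have := inB (lshift m j); rewrite inE (unsplitK (inl j)) => /eqP.
  + apply/forallP => k.
    have := inB (rshift p k); rewrite inE (unsplitK (inr k)).
    case/existsP => y /andP [yT /eqP eq_y].
    by have -> : chain_suffix c k = y by apply/val_inj; rewrite /= eq_y.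
- case=> [/eqP <- inT] i; rewrite inE.
  case: split_ordP => [j ->|k ->]; rewrite ?(unsplitK (inl j)) ?(unsplitK (inr k)).
  + by rewrite ffunE.
  + by apply/existsP; exists (chain_suffix c k); rewrite eqxx andbT (forallP inT).
Qed.

(* Prepending keeps the block type: singletons on unit levels, |V| = (sigma k + 1)_A after. *)
Lemma prepend_block_ok (T : block A a m) (u : prefix_choice) :
  block_okb T -> block_okb (prepend_block T u).
Proof.
move=> /block_okP okT; apply/block_okP => i; rewrite /= permE /sum_perm_fun.
case: split_ordP => [j ->|k ->]; rewrite ?(unsplitK (inl j)) ?(unsplitK (inr k)) /=.
- rewrite G_unit // -(cards1 (u j)); apply: eq_card => x.
  by rewrite !inE.
- rewrite G_sizes -okT -(card_imset _ (@cast_ord_inj _ _ (esym (G_levels k)))).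
  apply: eq_card => x; rewrite inE; apply/existsP/imsetP.
  + by case=> y /andP [yT /eqP eq_y]; exists y => //; apply/val_inj; rewrite /= eq_y.
  + by case=> y yT ->; exists y; rewrite yT eqxx.
Qed.

(* Each chain determines its prefix u, and its suffix lies in exactly one tile T. *)
Lemma prepend_unit_levels_tiling : layer_tiling A a m -> layer_tiling G a (p + m).
Proof.
case=> bs [okbs cover].
have okbs' : all (@block_okb A a m) bs.
  by apply/(all_nthP (Block 1 (fun _ => set0))) => i /okbs /block_okP.
apply: (layer_tilingP (bs := [seq prepend_block T u | u <- enum prefix_choice, T <- bs])).
  elim: (enum prefix_choice) => // u us IH; rewrite allpairs_cons all_cat IH andbT all_map.
  by apply: (sub_all _ okbs') => T; apply: prepend_block_ok.
move=> c; rewrite count_flatten -map_comp.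
have count_u u : count (in_block c) [seq prepend_block T u | T <- bs] = (u == chain_prefix c).
  rewrite count_map; under eq_count => T do rewrite /= in_prepend_block.
  by rewrite eq_sym; case: eqP => _ /=; [exact: cover | exact: count_pred0].
rewrite (eq_map count_u) sumn_count.
by rewrite (count_uniq_mem _ (enum_uniq _)) mem_enum.
Qed.
End PrependUnitLevels.

Lemma shift_seq_unit (A : nat -> nat) (s n : nat) :
  A 0 = 1 -> n <= s -> shift_seq s A n = 1.
Proof.
by move=> A0 le_ns; rewrite /shift_seq; case: ltnP => // ?; have -> : n - s = 0 by lia.
Qed.

Lemma shift_seq_addl (A : nat -> nat) (s n : nat) : shift_seq s A (s + n) = A n.
Proof. by rewrite /shift_seq ltnNge leq_addr /= addKn. Qed.

(* Denominator of (+)_s A: the first s factors are 1. *)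
Lemma fnom_den_shift (A : nat -> nat) (s k : nat) :
  A 0 = 1 -> fnom_den (shift_seq s A) k = fnom_den A (k - s).
Proof.
move=> A0; elim: k => [|k IH]; first by rewrite sub0n /fnom_den !big_ord0.
rewrite /fnom_den big_ord_recr /= -/(fnom_den _ k) IH.
have [le_ks|lt_sk] := leqP k.+1 s.
  have [-> ->] : k.+1 - s = 0 /\ k - s = 0 by lia.
  by rewrite shift_seq_unit // muln1.
have -> : k.+1 = s + (k - s).+1 by lia.
by rewrite shift_seq_addl addKn /fnom_den big_ord_recr.
Qed.

(* Numerator of (+)_s A: only the factors with index >= s contribute. *)
Lemma fnom_num_shift (A : nat -> nat) (s n k : nat) :
  A 0 = 1 -> fnom_num (shift_seq s A) n k = fnom_num A (n - s) (minn k (n - s)).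
Proof.
move=> A0; elim: k => [|k IH]; first by rewrite min0n /fnom_num !big_ord0.
rewrite /fnom_num big_ord_recr /= -/(fnom_num _ n k) IH.
have [lt_k|le_k] := ltnP k (n - s).
  rewrite (minn_idPl lt_k) [in RHS]big_ord_recr /=.
  have -> : n - k = s + (n - s - k) by lia.
  by rewrite shift_seq_addl.
by rewrite (minn_idPr (leqW le_k)) shift_seq_unit ?muln1 //; lia.
Qed.

Lemma fnom_den_dvd (F : nat -> nat) (k l : nat) : k <= l -> fnom_den F k %| fnom_den F l.
Proof.
move=> /subnK <-; elim: (l - k) => [|d IH]; first by rewrite add0n.
by rewrite addSn /fnom_den big_ord_recr /= dvdn_mulr.
Qed.

Lemma shift_admissible (A : nat -> nat) (s : nat) :
  cobweb_admissible A -> cobweb_admissible (shift_seq s A).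
Proof.
move=> [A0 admA]; split; first exact: shift_seq_unit.
move=> n k le_kn; rewrite fnom_den_shift // fnom_num_shift //.
have [den_gt0 _] := admA (k - s) (k - s) (leqnn _).
split=> //; have [_ den_dvd_num] := admA (n - s) _ (geq_minr k (n - s)).
apply: dvdn_trans den_dvd_num; apply: fnom_den_dvd.
by rewrite leq_min leq_subr leq_sub2r.
Qed.

(* A layer of (+)_s A starting at a: its first min(m, s) levels are prepended
   unit levels of an A-layer starting at a with the remaining levels. *)
Lemma shift_layer_tiling (A : nat -> nat) (s a m : nat) :
  A 0 = 1 -> (forall m', 1 <= m' -> layer_tiling A a m') ->
  layer_tiling (shift_seq s A) a m.
Proof.
move=> A0 tilA; have [le_ms|lt_sm] := leqP m s.
  rewrite -[m]addn0; apply: prepend_unit_levels_tiling (empty_layer_tiling A a).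
  - by case.
  - by move=> j lt_jm; rewrite shift_seq_unit //; apply: leq_trans le_ms.
  - by case.
rewrite -(subnKC (ltnW lt_sm)); apply: prepend_unit_levels_tiling.
- by move=> k; rewrite addnCA shift_seq_addl.
- by move=> j lt_js; rewrite shift_seq_unit.
- by move=> k; rewrite -addnS shift_seq_addl.
- by apply: tilA; rewrite subn_gt0.
Qed.

Theorem mainTheorem5 (A : nat -> nat) (s : nat) :
  cobweb_tiling A -> A 0 = 1 -> cobweb_tiling (shift_seq s A).
Proof.
move=> [admA tilA] A0; split; first exact: shift_admissible.
by move=> a m a_ge1 _; apply: shift_layer_tiling => // m'; apply: tilA.
Qed.
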